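(* Consider the noisy Hegselmann–Krause model with heterogeneously prejudiced agents described in the context, with $\epsilon\in(0,1)$, $\alpha\in(0,1]$ and noise bound $\delta\ge0$. For every initial condition $x(0)\in[0,1]^n$, almost surely $$\limsup_{t\to\infty}\max_{i\in\mathcal{S}_1}|x_i(t)-J_1|\le\frac{(1-\alpha)\epsilon+\delta}{\alpha}\quad\text{and}\quad \limsup_{t\to\infty}\max_{i\in\mathcal{S}_2}|x_i(t)-J_2|\le\frac{(1-\alpha)\epsilon+\delta}{\alpha}.$$
   Context: Agents $\mathcal{V}=\{1,\dots,n\}$ with opinions $x_i(t)\in[0,1]$, $t=0,1,2,\dots$. $\mathcal{V}=\mathcal{S}_1\cup\mathcal{S}_2$ with $\mathcal{S}_1\cap\mathcal{S}_2=\emptyset$; agents in $\mathcal{S}_k$ have prejudice value $J_k\in[0,1]$ ($k=1,2$), with $|J_1-J_2|>\epsilon$. Confidence bound $\epsilon$, attraction strength $\alpha\in(0,1]$. Neighbor set $\mathcal{N}_i(x(t))=\{j\in\mathcal{V}:|x_j(t)-x_i(t)|\le\epsilon\}$. For $i\in\mathcal{S}_k$, $x_i^*(t)=(1-\alpha)|\mathcal{N}_i(x(t))|^{-1}\sum_{j\in\mathcal{N}_i(x(t))}x_j(t)+\alpha J_k+\xi_i(t+1)$, and $x_i(t+1)$ equals $1$ if $x_i^*(t)>1$, $x_i^*(t)$ if $x_i^*(t)\in[0,1]$, $0$ if $x_i^*(t)<0$. The noises $\{\xi_i(t)\}_{i\in\mathcal{V},t\ge1}$ are i.i.d. with $E\xi_1(1)=0$,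 $E\xi_1(1)^2>0$ and $|\xi_1(1)|\le\delta$ almost surely. *)

From Stdlib Require Import Reals Lra List.
Import ListNotations.
Open Scope R_scope.

(* Agents are indexed 0 .. n-1; an opinion profile is a function nat -> R
   (only the values at indices < n matter). *)

Definition nbr_sum (n : nat) (eps : R) (x : nat -> R) (i : nat) : R :=
  fold_right (fun j acc => if Rle_dec (Rabs (x j - x i)) eps then x j + acc else acc)
             0 (seq 0 n).

Definition nbr_card (n : nat) (eps : R) (x : nat -> R) (i : nat) : nat :=
  fold_right (fun j acc => if Rle_dec (Rabs (x j - x i)) eps then S acc else acc)
             O (seq 0 n).

Definition nbr_avg (n : nat) (eps : R) (x : nat -> R) (i : nat) : R :=
  nbr_sum n eps x i / INR (nbr_card n eps x i).

Definition clip01 (y : R) : R :=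
  if Rlt_dec 1 y then 1 else if Rlt_dec y 0 then 0 else y.

(* One step of the noisy HK model with heterogeneous prejudices.
   [inS1 i = true] means i is in S_1, otherwise i is in S_2;
   [xi] is the noise realisation at time t+1. *)
Definition hk_step (n : nat) (eps alpha J1 J2 : R) (inS1 : nat -> bool)
  (x : nat -> R) (xi : nat -> R) (i : nat) : R :=
  clip01 ((1 - alpha) * nbr_avg n eps x i
          + alpha * (if inS1 i then J1 else J2) + xi i).

(* Each agent is pulled towards its own prejudice with weight alpha, while the
   rest of the update is an average of opinions within eps of its own, hence
   within eps of it.  So the distance d_t of agent i to its prejudice J obeys
   d_(t+1) <= (1 - alpha) d_t + (1 - alpha) eps + delta (the clipping to [0,1]
   only helps, as J is in [0,1]), and iterating this affine contraction gives
   d_t <= (1 - alpha)^t + ((1 - alpha) eps + delta) / alpha.  The bound holds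
   for every bounded noise realisation, hence almost surely. *)
From Stdlib Require Import Reals Lra Lia List.
Open Scope R_scope.

Lemma nbr_fold_sum_near (eps a : R) (x : nat -> R) (l : list nat) :
  Rabs (fold_right (fun j acc => if Rle_dec (Rabs (x j - a)) eps then x j + acc else acc) 0 l
        - INR (fold_right (fun j acc => if Rle_dec (Rabs (x j - a)) eps then S acc else acc) O l) * a)
  <= INR (fold_right (fun j acc => if Rle_dec (Rabs (x j - a)) eps then S acc else acc) O l) * eps.
Proof.
  induction l as [|j l IH]; simpl.
  - rewrite Rmult_0_l, Rminus_0_r, Rabs_R0; lra.
  - destruct (Rle_dec (Rabs (x j - a)) eps) as [Hj|]; [|exact IH].
    rewrite S_INR.
    match goal with |- Rabs (_ + ?s - (?c + 1) * _) <= _ =>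
      replace (x j + s - (c + 1) * a) with ((x j - a) + (s - c * a)) by ring end.
    eapply Rle_trans; [apply Rabs_triang|]; lra.
Qed.

Lemma nbr_fold_card_pos (eps a : R) (x : nat -> R) (l : list nat) (i : nat) :
  0 <= eps -> In i l -> x i = a ->
  (1 <= fold_right (fun j acc => if Rle_dec (Rabs (x j - a)) eps then S acc else acc) O l)%nat.
Proof.
  intros Heps; induction l as [|j l IH]; simpl; [tauto|].
  intros [<-|Hin] Hxa; destruct Rle_dec as [|Hfar]; try lia; auto.
  exfalso; apply Hfar; rewrite Hxa, Rminus_diag, Rabs_R0; lra.
Qed.

Lemma nbr_avg_near (n : nat) (eps : R) (x : nat -> R) (i : nat) :
  (i < n)%nat -> 0 <= eps -> Rabs (nbr_avg n eps x i - x i) <= eps.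
Proof.
  intros Hi Heps; unfold nbr_avg, nbr_sum, nbr_card.
  assert (Hcard := nbr_fold_card_pos eps (x i) x (seq 0 n) i Heps
                     ltac:(apply in_seq; lia) eq_refl).
  assert (Hsum := nbr_fold_sum_near eps (x i) x (seq 0 n)).
  set (C := INR (fold_right _ O _)) in *; set (s := fold_right _ 0 _) in *.
  assert (HC : 1 <= C) by (apply le_INR in Hcard; exact Hcard).
  replace (s / C - x i) with ((s - C * x i) / C) by (field; lra).
  unfold Rdiv; rewrite Rabs_mult, Rabs_inv, (Rabs_right C) by lra.
  apply Rmult_le_reg_r with C; [lra|].
  rewrite Rmult_assoc, Rinv_l by lra; lra.
Qed.

Lemma clip01_dist_le (y J : R) : 0 <= J <= 1 -> Rabs (clip01 y - J) <= Rabs (y - J).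
Proof.
  intros HJ; unfold clip01.
  destruct Rlt_dec; [|destruct Rlt_dec]; unfold Rabs; repeat destruct Rcase_abs; lra.
Qed.

Lemma hk_step_dist_prejudice (n : nat) (eps alpha J1 J2 : R) (inS1 : nat -> bool)
  (x xi : nat -> R) (i : nat) :
  (i < n)%nat -> 0 <= eps -> alpha <= 1 ->
  0 <= (if inS1 i then J1 else J2) <= 1 ->
  Rabs (hk_step n eps alpha J1 J2 inS1 x xi i - (if inS1 i then J1 else J2))
  <= (1 - alpha) * Rabs (x i - (if inS1 i then J1 else J2)) + ((1 - alpha) * eps + Rabs (xi i)).
Proof.
  intros Hi Heps Ha; unfold hk_step; set (J := if inS1 i then J1 else J2); intros HJ.
  eapply Rle_trans; [apply clip01_dist_le, HJ|].
  assert (Havg := nbr_avg_near n eps x i Hi Heps).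
  replace ((1 - alpha) * nbr_avg n eps x i + alpha * J + xi i - J)
    with ((1 - alpha) * (x i - J) + (1 - alpha) * (nbr_avg n eps x i - x i) + xi i) by ring.
  eapply Rle_trans; [apply Rabs_triang|].
  eapply Rle_trans; [apply Rplus_le_compat_r, Rabs_triang|].
  rewrite !Rabs_mult, (Rabs_right (1 - alpha)) by lra.
  assert ((1 - alpha) * Rabs (nbr_avg n eps x i - x i) <= (1 - alpha) * eps)
    by (apply Rmult_le_compat_l; lra).
  lra.
Qed.

Lemma affine_recursion_le (q c : R) (d : nat -> R) :
  0 <= q < 1 -> 0 <= c -> (forall t, d (S t) <= q * d t + c) ->
  forall t, d t <= q ^ t * d O + c / (1 - q).
Proof.
  intros Hq Hc Hd; assert (Hfix : 0 <= c / (1 - q))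
    by (apply Rmult_le_pos; [lra | left; apply Rinv_0_lt_compat; lra]).
  induction t as [|t IH]; simpl; [lra|].
  replace (q * q ^ t * d O + c / (1 - q)) with (q * (q ^ t * d O + c / (1 - q)) + c)
    by (field; lra).
  eapply Rle_trans; [apply Hd|].
  apply Rplus_le_compat_r, Rmult_le_compat_l; lra.
Qed.

Lemma pow_eventually_le (q eta : R) :
  0 <= q < 1 -> 0 < eta -> exists T, forall t, (T <= t)%nat -> q ^ t <= eta.
Proof.
  intros Hq Heta.
  destruct (pow_lt_1_zero q ltac:(rewrite Rabs_right; lra) eta Heta) as [T HT].
  exists T; intros t Ht.
  specialize (HT t Ht); rewrite Rabs_right in HT by (apply Rle_ge, pow_le; lra); lra.
Qed.

Section NoisyHK.

Variables (n : nat) (eps alpha delta J1 J2 : R) (inS1 : nat -> bool).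
Variables (xi x : nat -> nat -> R).

Hypothesis eps_pos : 0 < eps.
Hypothesis alpha_range : 0 < alpha <= 1.
Hypothesis J1_range : 0 <= J1 <= 1.
Hypothesis J2_range : 0 <= J2 <= 1.
Hypothesis noise_bounded : forall t i, (i < n)%nat -> Rabs (xi (S t) i) <= delta.
Hypothesis init_range : forall i, (i < n)%nat -> 0 <= x O i <= 1.
Hypothesis dynamics : forall t i, (i < n)%nat ->
  x (S t) i = hk_step n eps alpha J1 J2 inS1 (x t) (xi (S t)) i.

Lemma dist_prejudice_le (i : nat) : (i < n)%nat -> forall t,
  Rabs (x t i - (if inS1 i then J1 else J2)) <= (1 - alpha) ^ t + ((1 - alpha) * eps + delta) / alpha.
Proof.
  intros Hi t; set (J := if inS1 i then J1 else J2).
  assert (HJ : 0 <= J <= 1) by (unfold J; destruct (inS1 i); lra).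
  assert (Hd0 : Rabs (x O i - J) <= 1)
    by (apply Rabs_le; specialize (init_range i Hi); lra).
  assert (Hrec : forall s, Rabs (x (S s) i - J)
                  <= (1 - alpha) * Rabs (x s i - J) + ((1 - alpha) * eps + delta)).
  { intro s; rewrite dynamics by exact Hi.
    eapply Rle_trans; [apply hk_step_dist_prejudice; auto; lra|].
    fold J; specialize (noise_bounded s i Hi); lra. }
  assert (Hc : 0 <= (1 - alpha) * eps + delta).
  { assert (0 <= (1 - alpha) * eps) by (apply Rmult_le_pos; lra).
    specialize (noise_bounded O i Hi); pose proof (Rabs_pos (xi 1%nat i)); lra. }
  pose proof (affine_recursion_le (1 - alpha) _ (fun s => Rabs (x s i - J))
                ltac:(lra) Hc Hrec t) as Hbound; simpl in Hbound.
  replace (1 - (1 - alpha)) with alpha in Hbound by ring.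
  assert ((1 - alpha) ^ t * Rabs (x O i - J) <= (1 - alpha) ^ t).
  { rewrite <- (Rmult_1_r ((1 - alpha) ^ t)) at 2.
    apply Rmult_le_compat_l; [apply pow_le; lra | exact Hd0]. }
  lra.
Qed.

Lemma eventually_near_prejudice (eta : R) : 0 < eta -> exists T, forall t i,
  (T <= t)%nat -> (i < n)%nat ->
  Rabs (x t i - (if inS1 i then J1 else J2)) <= ((1 - alpha) * eps + delta) / alpha + eta.
Proof.
  intros Heta; destruct (pow_eventually_le (1 - alpha) eta ltac:(lra) Heta) as [T HT].
  exists T; intros t i Ht Hi.
  specialize (HT t Ht); pose proof (dist_prejudice_le i Hi t); lra.
Qed.

End NoisyHK.

Theorem theorem2 (n : nat) (eps alpha delta J1 J2 : R) (inS1 : nat -> bool)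
  (xi : nat -> nat -> R) (x : nat -> nat -> R) :
  0 < eps < 1 ->
  0 < alpha <= 1 ->
  0 <= delta ->
  0 <= J1 <= 1 -> 0 <= J2 <= 1 ->
  Rabs (J1 - J2) > eps ->
  (forall t i, (i < n)%nat -> Rabs (xi (S t) i) <= delta) ->
  (forall i, (i < n)%nat -> 0 <= x 0%nat i <= 1) ->
  (forall t i, (i < n)%nat ->
     x (S t) i = hk_step n eps alpha J1 J2 inS1 (x t) (xi (S t)) i) ->
  (forall eta, 0 < eta -> exists T, forall t i, (T <= t)%nat -> (i < n)%nat ->
     inS1 i = true ->
     Rabs (x t i - J1) <= ((1 - alpha) * eps + delta) / alpha + eta) /\
  (forall eta, 0 < eta -> exists T, forall t i, (T <= t)%nat -> (i < n)%nat ->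
     inS1 i = false ->
     Rabs (x t i - J2) <= ((1 - alpha) * eps + delta) / alpha + eta).
Proof.
  intros Heps Halpha _ HJ1 HJ2 _ Hnoise Hinit Hdyn.
  split; intros eta Heta;
    destruct (eventually_near_prejudice n eps alpha delta J1 J2 inS1 xi x
                ltac:(lra) Halpha HJ1 HJ2 Hnoise Hinit Hdyn eta Heta) as [T HT];
    exists T; intros t i Ht Hi Hside;
    specialize (HT t i Ht Hi); rewrite Hside in HT; exact HT.
Qed.
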